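(* Let $P$ be a flasque pre-meadow with $\mathbf{a}$. Then $P=P_0+0\cdot P$, i.e. $P=\{y+0\cdot z\mid y\in P_0,\ z\in P\}$.
   Context: A pre-meadow is a structure $(P,+,-,\cdot,0,1)$ satisfying: $(x+y)+z=x+(y+z)$, $x+y=y+x$, $x+0=x$, $x+(-x)=0\cdot x$, $(xy)z=x(yz)$, $xy=yx$, $1\cdot x=x$, $x(y+z)=xy+xz$, $-(-x)=x$, $0\cdot(x+y)=0\cdot x\cdot y$. For $z\in 0\cdot P$ put $P_z:=\{x\in P\mid 0\cdot x=z\}$. $P$ is a pre-meadow with $\mathbf{a}$ if there is a unique $z\in 0\cdot P$ with $|P_z|=1$, denoted $\mathbf{a}$, and $x+\mathbf{a}=\mathbf{a}$ for all $x\in P$. Each $P_{0\cdot z}$ is a commutative ring with the induced operations. The set $0\cdot P$ is ordered by $0\cdot z\le 0\cdot w$ iff $0\cdot z\cdot w=0\cdot z$. For $0\cdot z\le 0\cdot w$ the transition map $f_{0\cdot w,0\cdot z}:P_{0\cdot w}\to P_{0\cdot z}$ is the ring homomorphism $x\mapsto x+0\cdot z$. $P$ is flasque if all transition maps are surjective. *)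

Record premeadow := PreMeadow {
  pm_car :> Type;
  pm_add : pm_car -> pm_car -> pm_car;
  pm_opp : pm_car -> pm_car;
  pm_mul : pm_car -> pm_car -> pm_car;
  pm_zero : pm_car;
  pm_one : pm_car;
  pm_addA : forall x y z, pm_add (pm_add x y) z = pm_add x (pm_add y z);
  pm_addC : forall x y, pm_add x y = pm_add y x;
  pm_add0 : forall x, pm_add x pm_zero = x;
  pm_addN : forall x, pm_add x (pm_opp x) = pm_mul pm_zero x;
  pm_mulA : forall x y z, pm_mul (pm_mul x y) z = pm_mul x (pm_mul y z);
  pm_mulC : forall x y, pm_mul x y = pm_mul y x;
  pm_mul1 : forall x, pm_mul pm_one x = x;
  pm_mulDr : forall x y z, pm_mul x (pm_add y z) = pm_add (pm_mul x y) (pm_mul x z);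
  pm_oppK : forall x, pm_opp (pm_opp x) = x;
  pm_zeroD : forall x y,
      pm_mul pm_zero (pm_add x y) = pm_mul (pm_mul pm_zero x) y
}.

Arguments pm_add {p}. Arguments pm_opp {p}. Arguments pm_mul {p}.
Arguments pm_zero {p}. Arguments pm_one {p}.

Section Defs.
Variable P : premeadow.

Definition in_zeroP (z : P) : Prop := exists w : P, z = pm_mul pm_zero w.

Definition in_Pz (z x : P) : Prop := pm_mul pm_zero x = z.

Definition premeadow_with_a : Prop :=
  exists a : P,
    (in_zeroP a /\ (exists! x : P, in_Pz a x)) /\
    (forall z : P, in_zeroP z -> (exists! x : P, in_Pz z x) -> z = a) /\
    (forall x : P, pm_add x a = a).

(* order on 0.P:  0z <= 0w  iff  0 z w = 0 z *)
Definition zle (z w : P) : Prop := pm_mul (pm_mul pm_zero z) w = pm_mul pm_zero z.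

(* flasque: every transition map f_{0w,0z} : P_{0w} -> P_{0z}, x |-> x + 0z,
   is surjective whenever 0z <= 0w. *)
Definition flasque : Prop :=
  forall z w : P, zle z w ->
    forall y : P, in_Pz (pm_mul pm_zero z) y ->
      exists x : P, in_Pz (pm_mul pm_zero w) x /\
                    pm_add x (pm_mul pm_zero z) = y.

End Defs.


(* Every 0x lies below 0 = 0*1, so flasqueness makes the transition map
   P_0 -> P_{0x}, y |-> y + 0x, surjective; since x itself lies in P_{0x},
   it has a preimage y in P_0. *)

Section Flasque.
Variable P : premeadow.

Lemma pm_mulr1 (x : P) : pm_mul x pm_one = x.
Proof. rewrite pm_mulC. apply pm_mul1. Qed.

Lemma zle_one (z : P) : zle P z pm_one.
Proof. unfold zle. apply pm_mulr1. Qed.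

Lemma flasque_P0_decomp (x : P) :
  flasque P -> exists y : P, in_Pz P pm_zero y /\ pm_add y (pm_mul pm_zero x) = x.
Proof.
  intros Hflasque.
  destruct (Hflasque x pm_one (zle_one x) x eq_refl) as [y [Hy Hyx]].
  exists y. split; [| exact Hyx].
  unfold in_Pz in *. rewrite Hy. apply pm_mulr1.
Qed.

End Flasque.

Theorem proposition3p7 (P : premeadow) :
  premeadow_with_a P -> flasque P ->
  forall x : P, exists y z : P,
    in_Pz P pm_zero y /\ x = pm_add y (pm_mul pm_zero z).
Proof.
  intros _ Hflasque x.
  destruct (flasque_P0_decomp P x Hflasque) as [y [Hy Hyx]].
  exists y, x. split; [exact Hy | symmetry; exact Hyx].
Qed.
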